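(* Let $H$ be a finite, connected, $d$-regular graph on $[n]$ and $\Phi(x,y)$ a standard symmetric polynomial of partial degree $d$. Then $G(\Phi)^*$ has some component isomorphic to $H$ if and only if $U(H,\Phi)\ne\emptyset$.
   Context: For a symmetric $\Phi(x,y)\in\mathbb{C}[x,y]$ of partial degree $d$ (degree $d$ in $y$), write $\Phi(x,y)=\sum_{i=0}^d a_i(x)y^i$. $G(\Phi)$ has vertex set $\mathbb{C}$, the neighbours of $u$ being the roots of $\Phi(u,y)$ with multiplicity (edges = points of $\mathbb{V}(\Phi)$). A component is singular if it has a loop ($\Phi(u,u)=0$), a multiple edge ($\Phi(u,y)$ has a multiple root) or a defective vertex ($a_d(u)=0$). $\Phi$ is standard if it is squarefree, $\Phi(x,x)\not\equiv 0$, and $\Phi$ has no nonconstant factor depending only on $x$ (or only on $y$); then only finitely many components are singular and $G(\Phi)^*$ is $G(\Phi)$ with these removed. With $E$ the edge set of $H$: $S(H,\Phi)=\{\Phi(x_i,x_j):ij\in E\}$, $W(H,\Phi)=\mathbb{V}(S(H,\Phi))\subseteq\mathbb{C}^n$, $Z(H,\Phi)=W(H,\Phi)\cap\bigcup_{i>j}\mathbb{V}(x_i-x_j)$, and $U(H,\Phi)=\overline{W(H,\Phi)\setminus Z(H,\Phi)}$ (Zariski closure). *)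

(* The complex field C is modelled as R[i] = complex R for
   R : realType (MathComp-Analysis reals), i.e. C = R + iR with R the reals. *)
From HB Require Import structures.
From mathcomp Require Import all_boot all_order all_algebra.
From mathcomp Require Import polyXY.
From mathcomp Require Import mpoly.
From mathcomp Require Import complex.
From mathcomp Require Import reals.

Set Implicit Arguments.
Unset Strict Implicit.
Unset Printing Implicit Defensive.

Import Order.TTheory GRing.Theory Num.Theory.
Local Open Scope ring_scope.

Section Defs.
Variable F : fieldType.

(* A bivariate polynomial Phi(x,y) = \sum_i a_i(x) y^i is an element of
   {poly {poly F}}: outer variable y, coefficients a_i(x) in {poly F}. *)

Definition specX (Phi : {poly {poly F}}) (u : F) : {poly F} :=
  map_poly (fun a : {poly F} => a.[u]) Phi.

Definition evalXY (Phi : {poly {poly F}}) (u v : F) : F := (specX Phi u).[v].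

Definition symmetricXY (Phi : {poly {poly F}}) : Prop := swapXY Phi = Phi.

Definition partial_degree (Phi : {poly {poly F}}) (d : nat) : Prop :=
  size Phi = d.+1.

Definition squarefreeXY (Phi : {poly {poly F}}) : Prop :=
  forall g r : {poly {poly F}}, Phi = g * g * r -> g \is a GRing.unit.

Definition standard (Phi : {poly {poly F}}) : Prop :=
  [/\ squarefreeXY Phi,
      Phi.['X] != 0 (* Phi(x,x) is not identically zero *),
      (forall (a : {poly F}) (r : {poly {poly F}}),
          Phi = a%:P * r -> (size a <= 1)%N) (* no nonconstant factor in x only *)
    & (forall (b : {poly F}) (r : {poly {poly F}}),
          Phi = map_poly polyC b * r -> (size b <= 1)%N) (* nor in y only *)].

(* The graph G(Phi): vertex set F, u ~ v iff Phi(u,v) = 0. *)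
Definition adjXY (Phi : {poly {poly F}}) : rel F :=
  fun u v => evalXY Phi u v == 0.

Definition connXY (Phi : {poly {poly F}}) (u v : F) : Prop :=
  exists s : seq F, path (adjXY Phi) u s /\ last u s = v.

(* w is a loop, is incident to a multiple edge, or is defective *)
Definition singular_vertex (Phi : {poly {poly F}}) (w : F) : Prop :=
  [\/ evalXY Phi w w = 0,
      exists v : F, (('X - v%:P) ^+ 2 %| specX Phi w)
    | (lead_coef Phi).[w] = 0].

(* the component of u is not singular, i.e. it is a component of G(Phi)^* *)
Definition nonsingular_component (Phi : {poly {poly F}}) (u : F) : Prop :=
  forall w, connXY Phi u w -> ~ singular_vertex Phi w.

(* H (graph on [n] = 'I_n with edge relation e) is isomorphic to the
   component of u in G(Phi). *)
Definition iso_component n (e : rel 'I_n) (Phi : {poly {poly F}}) (u : F) : Prop :=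
  exists f : 'I_n -> F,
    [/\ injective f,
        (forall v, connXY Phi u v <-> exists i, f i = v)
      & (forall i j, e i j <-> evalXY Phi (f i) (f j) = 0)].

Definition has_component_iso n (e : rel 'I_n) (Phi : {poly {poly F}}) : Prop :=
  exists u : F, nonsingular_component Phi u /\ iso_component e Phi u.

Definition simple_graph n (e : rel 'I_n) : Prop :=
  (forall i j, e i j = e j i) /\ (forall i, ~~ e i i).
Definition connected_graph n (e : rel 'I_n) : Prop :=
  (0 < n)%N /\ forall i j, connect e i j.
Definition regular_graph n (e : rel 'I_n) (d : nat) : Prop :=
  forall i, #|[set j | e i j]| = d.

Definition W_HPhi n (e : rel 'I_n) (Phi : {poly {poly F}}) (x : 'I_n -> F) : Prop :=
  forall i j, e i j -> evalXY Phi (x i) (x j) = 0.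

Definition Z_HPhi n (e : rel 'I_n) (Phi : {poly {poly F}}) (x : 'I_n -> F) : Prop :=
  W_HPhi e Phi x /\ exists i j : 'I_n, (j < i)%N /\ x i = x j.

Definition zariski_closure n (S : ('I_n -> F) -> Prop) (x : 'I_n -> F) : Prop :=
  forall p : {mpoly F[n]}, (forall y, S y -> p.@[y] = 0) -> p.@[x] = 0.

Definition U_HPhi n (e : rel 'I_n) (Phi : {poly {poly F}}) : ('I_n -> F) -> Prop :=
  zariski_closure (fun x => W_HPhi e Phi x /\ ~ Z_HPhi e Phi x).

End Defs.

(* A point of W(H,Phi) outside Z(H,Phi) is an injective labelling x of the
   vertices of H such that x_i and x_j are adjacent in G(Phi) whenever ij is an
   edge of H.  Each x_i then has d distinct neighbours among the x_j, while
   Phi(x_i, y) has degree at most d in y and is nonzero because Phi has no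
   factor in x alone.  So these d neighbours are all its roots, each simple, and
   the degree is exactly d: x_i is neither a loop, nor on a multiple edge, nor
   defective, and the component of x_i in G(Phi) is exactly the image of x,
   a copy of H.  Conversely a component isomorphic to H is such a labelling,
   and U(H,Phi) is nonempty iff W(H,Phi) \ Z(H,Phi) is, since the Zariski
   closure of the empty set is empty. *)
From HB Require Import structures.
From mathcomp Require Import all_boot all_order all_algebra.
From mathcomp Require Import polyXY mpoly complex reals.
From Stdlib Require Import Classical.

Set Implicit Arguments.
Unset Strict Implicit.
Unset Printing Implicit Defensive.

Import GRing.Theory Num.Theory.
Local Open Scope ring_scope.

Section ZariskiClosure.
Variables (F : fieldType) (n : nat) (S : ('I_n -> F) -> Prop).

Lemma zariski_closure_subset x : S x -> zariski_closure S x.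
Proof. by move=> Sx p; apply. Qed.

Lemma zariski_closure_nonempty x : zariski_closure S x -> exists y, S y.
Proof.
move=> Sx; apply: NNPP => S0.
have := Sx 1 (fun y Sy => False_ind _ (S0 (ex_intro _ y Sy))).
by rewrite meval1 => /eqP; rewrite oner_eq0.
Qed.

End ZariskiClosure.

Section FullRootSeq.
Variable F : fieldType.

Definition full_root_seq (p : {poly F}) (rs : seq F) :=
  [/\ p != 0, (size p <= (size rs).+1)%N, all (root p) rs & uniq rs].

Variables (p : {poly F}) (rs : seq F).
Hypothesis p_rs : full_root_seq p rs.

Lemma size_full_root_seq : size p = (size rs).+1.
Proof.
case: p_rs => p_neq0 size_p rs_roots rs_uniq.
by apply/eqP; rewrite eqn_leq size_p (max_poly_roots p_neq0 rs_roots rs_uniq).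
Qed.

Lemma root_full_root_seq v : root p v -> v \in rs.
Proof.
case: p_rs => p_neq0 size_p rs_roots rs_uniq pv; apply: contraT => v_rs.
have := max_poly_roots (rs := v :: rs) p_neq0.
by rewrite /= pv rs_roots v_rs rs_uniq ltnNge size_p => /(_ isT isT).
Qed.

Lemma full_root_seq_simple v : ~~ (('X - v%:P) ^+ 2 %| p).
Proof.
case: p_rs => p_neq0 _ rs_roots rs_uniq; apply/negP => /dvdpP [q def_p].
pose p' := q * ('X - v%:P).
have def_p' : p = p' * ('X - v%:P) by rewrite def_p /p' -mulrA expr2.
have p'_neq0 : p' != 0 by apply: contraNneq p_neq0 => p'0; rewrite def_p' p'0 mul0r.
have p'_roots : all (root p') rs.
  apply/allP => r /(allP rs_roots); rewrite /root def_p' hornerM mulf_eq0.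
  rewrite hornerXsubC subr_eq0; case: (eqVneq r v) => [-> _ | _]; last by rewrite orbF.
  by rewrite /root /p' hornerM hornerXsubC subrr mulr0.
have size_p' : size p' = size rs.
  have := size_full_root_seq; rewrite def_p' size_mul ?polyXsubC_eq0 // size_XsubC.
  by rewrite addn2 => -[].
by have := max_poly_roots p'_neq0 p'_roots rs_uniq; rewrite size_p' ltnn.
Qed.

End FullRootSeq.

Lemma specX_neq0 (F : fieldType) (Phi : {poly {poly F}}) (u : F) :
    (forall (a : {poly F}) (r : {poly {poly F}}), Phi = a%:P * r -> (size a <= 1)%N) ->
  specX Phi u != 0.
Proof.
move=> no_x_factor; apply/negP => /eqP Phi_u0.
pose a : {poly F} := 'X - u%:P.
have coef_root k : root Phi`_k u.
  have := @coef_map_id0 _ _ (fun b : {poly F} => b.[u]) Phi k (horner0 u).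
  by rewrite -/(specX Phi u) Phi_u0 coef0 /root => <-.
suff: (size a <= 1)%N by rewrite size_XsubC.
apply: (no_x_factor a (map_poly (fun c => c %/ a) Phi)).
apply/polyP => k; rewrite coefCM coef_map_id0 ?div0p //.
by rewrite mulrC divpK // dvdp_XsubCl.
Qed.

Lemma injective_notZ (F : fieldType) n (e : rel 'I_n) (Phi : {poly {poly F}}) x :
  W_HPhi e Phi x -> (~ Z_HPhi e Phi x <-> injective x).
Proof.
move=> Wx; split=> [notZ i j xij | x_inj [_ [i [j [ji xij]]]]].
  case: (ltngtP i j) => [ij|ji|/val_inj //]; case: notZ; split=> //.
    by exists j, i.
  by exists i, j.
by move: ji; rewrite (x_inj _ _ xij) ltnn.
Qed.

Section InjectiveSolution.
Variables (F : fieldType) (n d : nat) (e : rel 'I_n) (Phi : {poly {poly F}}).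
Hypotheses (e_irr : forall i, ~~ e i i) (e_reg : regular_graph e d).
Hypotheses (Phi_size : partial_degree Phi d).
Hypothesis no_x_factor :
  forall (a : {poly F}) (r : {poly {poly F}}), Phi = a%:P * r -> (size a <= 1)%N.
Variable x : 'I_n -> F.
Hypotheses (x_inj : injective x) (Wx : W_HPhi e Phi x).

Definition solution_nbhd i := [seq x j | j <- enum [set j | e i j]].

Let size_solution_nbhd i : size (solution_nbhd i) = d.
Proof. by rewrite size_map -cardE e_reg. Qed.

Let specX_full_root_seq i : full_root_seq (specX Phi (x i)) (solution_nbhd i).
Proof.
split; first exact: specX_neq0.
- by rewrite size_solution_nbhd -Phi_size size_poly.
- by apply/allP => v /mapP [j]; rewrite mem_enum inE => /Wx /eqP xij ->.
- by rewrite map_inj_uniq ?enum_uniq.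
Qed.

Lemma solution_adj i v : evalXY Phi (x i) v = 0 <-> exists2 j, e i j & x j = v.
Proof.
split=> [/eqP/(root_full_root_seq (specX_full_root_seq i)) | [j eij <-]]; last exact: Wx.
by case/mapP => j; rewrite mem_enum inE => eij ->; exists j.
Qed.

Lemma solution_nonsingular i : ~ singular_vertex Phi (x i).
Proof.
have Phi_x := specX_full_root_seq i; have [Phi_x_neq0 _ _ _] := Phi_x.
case=> [/solution_adj [j eij /x_inj ji] | [v] | lead0].
- by move: eij; rewrite ji (negPf (e_irr i)).
- exact/negP/(full_root_seq_simple Phi_x).
- have := lead_coef_eq0 (specX Phi (x i)); rewrite (negPf Phi_x_neq0).
  rewrite /lead_coef (size_full_root_seq Phi_x) size_solution_nbhd.
  rewrite /specX coef_map_id0 ?horner0 //.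
  by move: lead0; rewrite /lead_coef Phi_size => ->; rewrite eqxx.
Qed.

Lemma connXY_solution i v : connXY Phi (x i) v -> exists j, x j = v.
Proof.
case=> s [+ <-]; elim: s i => [|w s IHs] i /=; first by exists i.
by case/andP => /eqP /solution_adj [j _ <-]; apply: IHs.
Qed.

Lemma connect_connXY_solution i j : connect e i j -> connXY Phi (x i) (x j).
Proof.
case/connectP => s es ->; exists (map x s); split; last by rewrite last_map.
by elim: s i es => //= k s IHs i /andP [eik es]; rewrite IHs // andbT; apply/eqP/Wx.
Qed.

Lemma solution_component_iso : connected_graph e -> has_component_iso e Phi.
Proof.
case=> n_gt0 e_conn; pose i0 := Ordinal n_gt0.
exists (x i0); split.
  by move=> w /connXY_solution [i <-]; apply: solution_nonsingular.
exists x; split=> // [v | i j].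
  split; first exact: connXY_solution.
  by case=> i <-; apply: connect_connXY_solution.
by split=> [/Wx // | /solution_adj [k eik /x_inj <-]].
Qed.

End InjectiveSolution.

Theorem mainTheorem4 (R : realType) (n d : nat) (e : rel 'I_n)
    (Phi : {poly {poly R[i]}}) :
  simple_graph e -> connected_graph e -> regular_graph e d ->
  symmetricXY Phi -> partial_degree Phi d -> standard Phi ->
  (has_component_iso e Phi <-> exists x : 'I_n -> R[i], U_HPhi e Phi x).
Proof.
move=> [_ e_irr] e_conn e_reg _ Phi_size [_ _ no_x_factor _]; split.
  case=> _ [_ [f [f_inj _ f_adj]]]; exists f; apply: zariski_closure_subset.
  have Wf : W_HPhi e Phi f by move=> i j /f_adj.
  by split; last exact/(injective_notZ Wf).
case=> _ /zariski_closure_nonempty [x [Wx /(injective_notZ Wx) x_inj]].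
exact: (solution_component_iso (x := x) e_irr e_reg Phi_size no_x_factor x_inj Wx e_conn).
Qed.
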